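(* Let $m,n,u\in\mathbb{R}$ and let $(G_3,g,J)$ be the three-dimensional Lorentzian Lie group described in the context. Write $\mathbb{V}_{RC}$ for the real vector space of left-invariant Ricci collineations $\xi=\lambda_1\overline{e}_1+\lambda_2\overline{e}_2+\lambda_3\overline{e}_3$ ($\lambda_i\in\mathbb{R}$ constants) associated to the Yano connection. Then: (1) if $mnu=0$, every left-invariant vector field is a left-invariant Ricci collineation, i.e. $\mathbb{V}_{RC}=\langle\overline{e}_1,\overline{e}_2,\overline{e}_3\rangle$; (2) if $mnu\neq0$, then $\mathbb{V}_{RC}=\langle\overline{e}_3\rangle$.
   Context: $G_3$ is a connected three-dimensional Lie group whose Lie algebra has a basis $\{\overline{e}_1,\overline{e}_2,\overline{e}_3\}$ (left-invariant vector fields) with $[\overline{e}_1,\overline{e}_2]=-u\overline{e}_3$, $[\overline{e}_1,\overline{e}_3]=-n\overline{e}_2$, $[\overline{e}_2,\overline{e}_3]=m\overline{e}_1$. The metric $g$ is the left-invariant Lorentzian metric with $g(\overline{e}_1,\overline{e}_1)=g(\overline{e}_2,\overline{e}_2)=1$, $g(\overline{e}_3,\overline{e}_3)=-1$, $g(\overline{e}_i,\overline{e}_j)=0$ for $i\neq j$. $J$ is the left-invariant product structure with $J\overline{e}_1=\overline{e}_1$, $J\overline{e}_2=\overline{e}_2$, $J\overline{e}_3=-\overline{e}_3$. With $\nabla^{LC}$ the Levi-Civita connection of $g$, the Yano connection is $\nabla^{*}_XY=\nabla^{LC}_XY-\frac12(\nabla^{LC}_YJ)JX-\frac14[(\nabla^{LC}_XJ)JY-(\nabla^{LC}_{JX}J)Y]$;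 its curvature is $R^{*}(X,Y)Z=\nabla^{*}_X\nabla^{*}_YZ-\nabla^{*}_Y\nabla^{*}_XZ-\nabla^{*}_{[X,Y]}Z$; its Ricci tensor is $\mathrm{Ric}^{*}(X,Y)=-g(R^{*}(X,\overline{e}_1)Y,\overline{e}_1)-g(R^{*}(X,\overline{e}_2)Y,\overline{e}_2)+g(R^{*}(X,\overline{e}_3)Y,\overline{e}_3)$; and $\overline{\mathrm{Ric}^{*}}(X,Y)=\frac12(\mathrm{Ric}^{*}(X,Y)+\mathrm{Ric}^{*}(Y,X))$. For a left-invariant vector field $\xi$, $(\mathrm{L}_{\xi}\overline{\mathrm{Ric}^{*}})(X,Y)=\xi(\overline{\mathrm{Ric}^{*}}(X,Y))-\overline{\mathrm{Ric}^{*}}([\xi,X],Y)-\overline{\mathrm{Ric}^{*}}(X,[\xi,Y])$; $\xi$ is a left-invariant Ricci collineation if $\mathrm{L}_{\xi}\overline{\mathrm{Ric}^{*}}=0$. *)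

(* Left-invariant objects on G_3 are modelled on the Lie
   algebra R^3 = 'rV[R]_3 with basis ebase 0, ebase 1, ebase 2
   (= \bar e_1, \bar e_2, \bar e_3). *)
From HB Require Import structures.
From mathcomp Require Import all_boot all_order all_algebra.
From mathcomp Require Import reals.
Set Implicit Arguments. Unset Strict Implicit. Unset Printing Implicit Defensive.
Import Order.TTheory GRing.Theory Num.Theory.
Local Open Scope ring_scope.

Section G3.
Variables (R : realType) (m n u : R).

Definition vec := 'rV[R]_3.

Definition ebase (i : 'I_3) : vec := delta_mx 0 i.

Definition brk (i j : 'I_3) : vec :=
  match nat_of_ord i, nat_of_ord j with
  | 0, 1 => (- u) *: ebase (inord 2)
  | 1, 0 => u *: ebase (inord 2)
  | 0, 2 => (- n) *: ebase (inord 1)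
  | 2, 0 => n *: ebase (inord 1)
  | 1, 2 => m *: ebase (inord 0)
  | 2, 1 => (- m) *: ebase (inord 0)
  | _, _ => 0
  end.

Definition lie (X Y : vec) : vec :=
  \sum_(i < 3) \sum_(j < 3) (X 0 i * Y 0 j) *: brk i j.

Definition eps (i : 'I_3) : R := if nat_of_ord i == 2%N then -1 else 1.

Definition gmet (X Y : vec) : R := \sum_(i < 3) eps i * X 0 i * Y 0 i.

(* Levi-Civita connection on left-invariant fields (Koszul formula):
   2 g(nabla_X Y, Z) = g([X,Y],Z) - g([Y,Z],X) + g([Z,X],Y) *)
Definition nablaLC (X Y : vec) : vec :=
  \sum_(k < 3) (eps k / 2 * (gmet (lie X Y) (ebase k)
                 - gmet (lie Y (ebase k)) X + gmet (lie (ebase k) X) Y))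
               *: ebase k.

Definition Jop (X : vec) : vec := \sum_(k < 3) (eps k * X 0 k) *: ebase k.

Definition nablaJ (X Y : vec) : vec := nablaLC X (Jop Y) - Jop (nablaLC X Y).

Definition nablaY (X Y : vec) : vec :=
  nablaLC X Y - (1 / 2) *: nablaJ Y (Jop X)
  - (1 / 4) *: (nablaJ X (Jop Y) - nablaJ (Jop X) Y).

Definition curvY (X Y Z : vec) : vec :=
  nablaY X (nablaY Y Z) - nablaY Y (nablaY X Z) - nablaY (lie X Y) Z.

Definition RicY (X Y : vec) : R :=
  - gmet (curvY X (ebase (inord 0)) Y) (ebase (inord 0))
  - gmet (curvY X (ebase (inord 1)) Y) (ebase (inord 1))
  + gmet (curvY X (ebase (inord 2)) Y) (ebase (inord 2)).

Definition RicYsym (X Y : vec) : R := (RicY X Y + RicY Y X) / 2.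

(* Lie derivative along a left-invariant xi; the term xi(Ric(X,Y)) vanishes
   since Ric(X,Y) is constant for left-invariant X, Y. *)
Definition lieDerRic (xi X Y : vec) : R :=
  - RicYsym (lie xi X) Y - RicYsym X (lie xi Y).

Definition ricci_collineation (xi : vec) : Prop :=
  forall X Y : vec, lieDerRic xi X Y = 0.

End G3.

(* In the frame (e1, e2, e3) everything is polynomial in the coordinates.
   The Yano connection is [nabla_X Y = (-m x3 y2, n x3 y1, u (x2 y1 - x1 y2))],
   so the symmetrised Ricci tensor is [-nu x1 y1 - mu x2 y2] and its Lie
   derivative along xi is [mnu (xi2 (x3 y1 + x1 y3) - xi1 (x3 y2 + x2 y3))].
   This vanishes for all X, Y iff mnu = 0 or xi1 = xi2 = 0. *)
From HB Require Import structures.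
From mathcomp Require Import all_boot all_order all_algebra.
From mathcomp Require Import reals ring.
Import Order.TTheory GRing.Theory Num.Theory.
Local Open Scope ring_scope.

Local Notation i0 := (@Ordinal 3 0 isT).
Local Notation i1 := (@Ordinal 3 1 isT).
Local Notation i2 := (@Ordinal 3 2 isT).

Lemma big_ord3 (V : nmodType) (F : 'I_3 -> V) :
  \sum_(i < 3) F i = F i0 + F i1 + F i2.
Proof.
rewrite !big_ord_recl big_ord0 addr0 addrA.
by congr (F _ + F _ + F _); apply: val_inj.
Qed.

Lemma inord3E :
  (inord 0 = i0 :> 'I_3) * (inord 1 = i1 :> 'I_3) * (inord 2 = i2 :> 'I_3).
Proof. by do ![split]; apply: val_inj; rewrite /= inordK. Qed.

Lemma row3P (T : Type) (X Y : 'rV[T]_3) :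
  X 0 i0 = Y 0 i0 -> X 0 i1 = Y 0 i1 -> X 0 i2 = Y 0 i2 -> X = Y.
Proof.
move=> h0 h1 h2; apply/rowP => -[[|[|[|//]]] lt_k3];
  by rewrite (bool_irrelevance lt_k3 isT).
Qed.

Section YanoG3.
Variables (R : realType) (m n u : R).
Implicit Types (X Y Z xi : vec R).

Definition row3 (a b c : R) : vec R := \row_(k < 3) [:: a; b; c]`_k.

Lemma ebaseE (i k : 'I_3) : ebase R i 0 k = (i == k)%:R.
Proof. by rewrite mxE eqxx eq_sym. Qed.

Local Ltac coords :=
  do 2 rewrite ?summxE ?big_ord3;
  rewrite /brk /eps /= ?inord3E ?(mxE, ebaseE) /=.

Lemma lieE X Y : lie m n u X Y =
  row3 (m * (X 0 i1 * Y 0 i2 - X 0 i2 * Y 0 i1))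
       (- n * (X 0 i0 * Y 0 i2 - X 0 i2 * Y 0 i0))
       (- u * (X 0 i0 * Y 0 i1 - X 0 i1 * Y 0 i0)).
Proof. by apply: row3P; rewrite /lie; coords; ring. Qed.

Lemma gmetE X Y :
  gmet X Y = X 0 i0 * Y 0 i0 + X 0 i1 * Y 0 i1 - X 0 i2 * Y 0 i2.
Proof. rewrite /gmet; coords; ring. Qed.

Lemma JopE X : Jop X = row3 (X 0 i0) (X 0 i1) (- X 0 i2).
Proof. by apply: row3P; rewrite /Jop; coords; ring. Qed.

Lemma nablaLCE X Y : nablaLC m n u X Y =
  row3 ((X 0 i1 * Y 0 i2 * (m - n + u) - X 0 i2 * Y 0 i1 * (m + n - u)) / 2)
       ((X 0 i0 * Y 0 i2 * (m - n - u) + X 0 i2 * Y 0 i0 * (m + n - u)) / 2)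
       ((X 0 i0 * Y 0 i1 * (m - n - u) + X 0 i1 * Y 0 i0 * (m - n + u)) / 2).
Proof.
by apply: row3P; rewrite /nablaLC; coords; rewrite !lieE !gmetE; coords; ring.
Qed.

Lemma nablaYE X Y : nablaY m n u X Y =
  row3 (- m * X 0 i2 * Y 0 i1) (n * X 0 i2 * Y 0 i0)
       (u * (X 0 i1 * Y 0 i0 - X 0 i0 * Y 0 i1)).
Proof.
by apply: row3P; rewrite /nablaY /nablaJ !mxE !nablaLCE !JopE; coords; field.
Qed.

Lemma curvYE X Y Z : curvY m n u X Y Z =
  row3 (m * u * Z 0 i1 * (X 0 i1 * Y 0 i0 - X 0 i0 * Y 0 i1))
       (n * u * Z 0 i0 * (X 0 i0 * Y 0 i1 - X 0 i1 * Y 0 i0)) 0.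
Proof. by apply: row3P; rewrite /curvY !nablaYE !lieE; coords; ring. Qed.

Lemma RicYsymE X Y :
  RicYsym m n u X Y = - n * u * X 0 i0 * Y 0 i0 - m * u * X 0 i1 * Y 0 i1.
Proof. by rewrite /RicYsym /RicY !curvYE !gmetE; coords; field. Qed.

Lemma lieDerRicE xi X Y : lieDerRic m n u xi X Y =
  m * n * u * (xi 0 i1 * (X 0 i2 * Y 0 i0 + X 0 i0 * Y 0 i2)
               - xi 0 i0 * (X 0 i2 * Y 0 i1 + X 0 i1 * Y 0 i2)).
Proof. by rewrite /lieDerRic !RicYsymE !lieE; coords; ring. Qed.

Lemma ricci_collineationP xi : ricci_collineation m n u xi <->
  m * n * u = 0 \/ (xi 0 i0 = 0 /\ xi 0 i1 = 0).
Proof.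
split=> [rc | [mnu0 | [xi0 xi1]] X Y]; last first.
- by rewrite lieDerRicE xi0 xi1; ring.
- by rewrite lieDerRicE mnu0 mul0r.
have [-> | mnu_neq0] := eqVneq (m * n * u) 0; [by left | right].
have xi_eq0 k : m * n * u * xi 0 k = 0 -> xi 0 k = 0.
  by move/eqP; rewrite mulf_eq0 (negbTE mnu_neq0) => /eqP.
split; apply: xi_eq0.
- by rewrite -[RHS]oppr0 -(rc (ebase R i2) (ebase R i1)) lieDerRicE; coords; ring.
- by rewrite -(rc (ebase R i2) (ebase R i0)) lieDerRicE; coords; ring.
Qed.

Lemma ebase2_spanP xi :
  (exists c, xi = c *: ebase R i2) <-> xi 0 i0 = 0 /\ xi 0 i1 = 0.
Proof.
split=> [[c ->] | [xi0 xi1]]; first by rewrite !mxE /= !mulr0.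
by exists (xi 0 i2); apply: row3P; rewrite !mxE /= ?xi0 ?xi1 ?mulr0 ?mulr1.
Qed.

End YanoG3.

Theorem theorem3p9 (R : realType) (m n u : R) :
  (m * n * u = 0 -> forall xi : vec R, ricci_collineation m n u xi) /\
  (m * n * u != 0 -> forall xi : vec R,
      ricci_collineation m n u xi <-> exists c : R, xi = c *: ebase R (inord 2)).
Proof.
split=> [mnu0 xi | mnu_neq0 xi]; first by apply/ricci_collineationP; left.
rewrite ricci_collineationP inord3E ebase2_spanP.
by split=> [[mnu0 | //] | ]; [rewrite mnu0 eqxx in mnu_neq0 | right].
Qed.
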